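(* If a finite group $G$ is a $Q\sigma T$-group, then $G/R$ satisfies ${\bf Q}_{\sigma P}$ for every normal subgroup $R$ of $G$.
   Context: $\sigma=\{\sigma_i\mid i\in I\}$ is a partition of the set of all primes. A group is $\sigma$-primary if it is a $\sigma_i$-group for some $i$. $A_G$ is the core of $A$ in $G$. $A$ is $\sigma$-subnormal in $G$ if there is a chain $A=A_0\le\cdots\le A_n=G$ with, for each $i$, $A_{i-1}\trianglelefteq A_i$ or $A_i/(A_{i-1})_{A_i}$ $\sigma$-primary. $A$ is modular in $G$ if (1) $\langle X, A\cap Z\rangle=\langle X,A\rangle\cap Z$ for all $X\le Z\le G$, and (2) $\langle A, Y\cap Z\rangle=\langle A,Y\rangle\cap Z$ for all $Y,Z\le G$ with $A\le Z$. $A$ is $\sigma$-quasinormal if it is $\sigma$-subnormal and modular. $G$ is a $Q\sigma T$-group if whenever $H$ is $\sigma$-quasinormal in $K$ and $K$ is $\sigma$-quasinormal in $G$, $H$ is $\sigma$-quasinormal in $G$. A $P$-group of type $(p,q)$ is a group $A\rtimes\langle t\rangle$ with $A$ an elementary abelian $p$-group and $t$ of prime order $q\neq p$ inducing a non-trivial power automorphism (one fixing every subgroup) on $A$. A group $X$ satisfies ${\bf Q}_{\sigma(p,q)}$ if whenever $N$ is a soluble normal subgroup of $X$ and $P/N$ is a normal subgroup of $X/N$ that is $\sigma$-primary and a $P$-group of type $(p,q)$, every subgroup of $P/N$ is modular in $X/N$. $X$ satisfies ${\bf Q}_{\sigma P}$ if it satisfies ${\bf Q}_{\sigma(p,q)}$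 for every pair of primes $p,q$ for which a $P$-group of type $(p,q)$ exists. *)

From mathcomp Require Import all_boot all_fingroup all_solvable.
Set Implicit Arguments. Unset Strict Implicit. Unset Printing Implicit Defensive.
Local Open Scope group_scope.

(* A partition sigma = {sigma_i | i in I} of the set of all primes is encoded
   by a map [sigma : nat -> I] sending each prime p to the index i of the
   class sigma_i containing p (values on non-primes are irrelevant). *)

Section SigmaDefs.
Variables (I : Type) (sigma : nat -> I).
Variable gT : finGroupType.

Definition sigma_primary (A : {set gT}) : Prop :=
  exists i : I, forall p, p \in primes #|A| -> sigma p = i.

End SigmaDefs.

Inductive sigma_subnormal (I : Type) (sigma : nat -> I) (gT : finGroupType)
  : {group gT} -> {group gT} -> Prop :=
| ssn_refl (G : {group gT}) : sigma_subnormal sigma G G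
| ssn_step (A B G : {group gT}) :
    A \subset B ->
    (A <| B \/ sigma_primary sigma (B / gcore A B)) ->
    sigma_subnormal sigma B G -> sigma_subnormal sigma A G.

Definition modular (gT : finGroupType) (A G : {group gT}) : Prop :=
  A \subset G /\
  (forall X Z : {group gT}, X \subset Z -> Z \subset G ->
     X <*> (A :&: Z) = (X <*> A) :&: Z) /\
  (forall Y Z : {group gT}, Y \subset G -> Z \subset G -> A \subset Z ->
     A <*> (Y :&: Z) = (A <*> Y) :&: Z).

Definition sigma_quasinormal (I : Type) (sigma : nat -> I) (gT : finGroupType)
  (A G : {group gT}) : Prop :=
  sigma_subnormal sigma A G /\ modular A G.

Definition QsigmaT (I : Type) (sigma : nat -> I) (gT : finGroupType)
  (G : {group gT}) : Prop :=
  forall H K : {group gT},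
    sigma_quasinormal sigma H K -> sigma_quasinormal sigma K G ->
    sigma_quasinormal sigma H G.

(* P is a P-group of type (p,q): P = A ><| <[t]> with A an elementary abelian
   p-group and t of prime order q <> p inducing a non-trivial power
   automorphism (fixing every subgroup) on A. *)
Definition Pgroup_type (gT : finGroupType) (p q : nat) (P : {set gT}) : Prop :=
  exists (A : {group gT}) (t : gT),
    p.-abelem A /\ prime q /\ q != p /\ #[t] = q /\
    A ><| <[t]> = P /\
    (forall B : {group gT}, B \subset A -> t \in 'N(B)) /\
    ~~ (t \in 'C(A)).

Definition Q_sigma_pq (I : Type) (sigma : nat -> I) (p q : nat)
  (gT : finGroupType) (X : {group gT}) : Prop :=
  forall (N : {group gT}) (Pb : {group coset_of N}),
    N <| X -> solvable N ->
    Pb <| X / N -> sigma_primary sigma Pb -> Pgroup_type p q Pb ->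
    forall Hb : {group coset_of N}, Hb \subset Pb -> modular Hb (X / N)%G.

(* X satisfies Q_{sigma P}. Q_{sigma(p,q)} holds vacuously when no P-group of
   type (p,q) exists, so quantifying over all p, q is the same. *)
Definition Q_sigma_P (I : Type) (sigma : nat -> I) (gT : finGroupType)
  (X : {group gT}) : Prop :=
  forall p q : nat, Q_sigma_pq sigma p q X.

From mathcomp Require Import all_boot all_fingroup all_solvable zify.
Set Implicit Arguments. Unset Strict Implicit. Unset Printing Implicit Defensive.
Local Open Scope group_scope.

(* Pull everything back along the projection f of G onto (G/R)/N.  If H lies
   in A, it is normal in P, and P is normal in f(G), so QsigmaT makes the
   preimage of H sigma-quasinormal in G.  Otherwise |BH : B| = q for every B
   between A :&: H and A, and BH descends from AH = P to (A :&: H)H = H.  In a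
   step from B<a> down to B, the subgroup B is normal of index pq in (B<a>)H, so
   the subgroups between them form a lattice of length 2; hence BH is modular
   in (B<a>)H, and sigma-subnormal since (B<a>)H/B is sigma-primary.  QsigmaT
   carries sigma-quasinormality of the preimages down the descent, and
   modularity of the preimage of H in G passes to H in f(G). *)

Lemma muln3_eq_prime_mul a b c p q :
  prime p -> prime q -> (a * b * c = p * q)%N -> [\/ a = 1, b = 1 | c = 1]%N.
Proof.
move=> pr_p pr_q Eabc.
have [-> | a_neq1] := eqVneq a 1%N; first by constructor 1.
have [-> | b_neq1] := eqVneq b 1%N; first by constructor 2.
constructor 3.
have a_gt1 : (1 < a)%N by have := prime_gt0 pr_p; have := prime_gt0 pr_q; nia.
wlog pdiv_a : p q pr_p pr_q Eabc / pdiv a = p.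
  move=> IH; have : pdiv a %| p * q by rewrite -Eabc -mulnA dvdn_mulr ?pdiv_dvd.
  rewrite Euclid_dvdM ?pdiv_prime // !dvdn_prime2 ?pdiv_prime //.
  case/orP=> /eqP pdiv_a; first exact: (IH p q).
  by apply: (IH q p pr_q pr_p) => //; rewrite Eabc mulnC.
have /dvdnP[a' Ea] := pdiv_dvd a; rewrite pdiv_a in Ea.
have Eq : (a' * b * c = q)%N by have := prime_gt0 pr_p; nia.
have /(prime_nt_dvdP pr_q b_neq1) Ebq : b %| q.
  by rewrite -Eq mulnAC dvdn_mull.
move/eqP: Eq; rewrite Ebq mulnAC -{2}[q]mul1n eqn_pmul2r ?prime_gt0 //.
by rewrite muln_eq1 => /andP[_ /eqP].
Qed.

Section ModularSubgroups.
Variable gT : finGroupType.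
Implicit Types (A B C D : {set gT}) (H K M X Y Z : {group gT}).

Lemma joingSS A B C D : A \subset C -> B \subset D -> A <*> B \subset C <*> D.
Proof. by move=> sAC sBD; rewrite genS ?setUSS. Qed.

Lemma joing_modl_sub X Y Z :
  X \subset Z -> X <*> (Y :&: Z) \subset (X <*> Y) :&: Z.
Proof.
move=> sXZ; rewrite join_subG !subsetI joing_subl sXZ subsetIr /= andbT.
exact: subset_trans (subsetIl Y Z) (joing_subr X Y).
Qed.

Lemma normal_modular H K : H <| K -> modular H K.
Proof.
case/andP=> sHK nHK; split=> //; split=> [X Z sXZ sZK | Y Z sYK sZK sHZ].
  have nHX : X \subset 'N(H) := subset_trans (subset_trans sXZ sZK) nHK.
  have nHZX : X \subset 'N(H :&: Z).
    by rewrite normsI // (subset_trans sXZ (normG Z)).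
  by rewrite (norm_joinEl nHZX) (norm_joinEl nHX) group_modl.
have nHYZ : Y :&: Z \subset 'N(H) by rewrite subIset // (subset_trans sYK nHK).
by rewrite (norm_joinEr nHYZ) (norm_joinEr (subset_trans sYK nHK)) group_modl.
Qed.

(* Modularity of H over a normal subgroup M <= H need only be tested on
   subgroups containing M: join them with M, then cut back by Dedekind's law. *)
Section ModularAboveNormal.
Variables M H K : {group gT}.
Hypotheses (nsMK : M <| K) (sMH : M \subset H).

Lemma modular_left_lift :
    (forall X Z, M \subset X -> X \subset Z -> Z \subset K ->
       X <*> (H :&: Z) = (X <*> H) :&: Z) ->
  forall X Z, X \subset Z -> Z \subset K -> X <*> (H :&: Z) = (X <*> H) :&: Z.
Proof.
move=> modM X Z sXZ sZK; apply/eqP; rewrite eqEsubset joing_modl_sub //=.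
have nMZ : Z \subset 'N(M) := subset_trans sZK (normal_norm nsMK).
pose Y := (X <*> (H :&: Z))%G.
have sYZ : Y \subset Z by rewrite join_subG sXZ subsetIr.
have nMY : Y \subset 'N(M) := subset_trans sYZ nMZ.
have sZMK : Z <*> M \subset K by rewrite join_subG sZK normal_sub.
have sXZM : X <*> M \subset Z <*> M by rewrite joingSS.
have sHZM_YM : H :&: (Z <*> M) \subset Y <*> M.
  rewrite (norm_joinEl nMZ) -group_modr // (norm_joinEl nMY) mulSg //.
  exact: joing_subr.
have sXH_YM : (X <*> H) :&: Z \subset (Y <*> M) :&: Z.
  apply: subset_trans (_ : ((X <*> M) <*> H) :&: (Z <*> M) :&: Z \subset _).
    rewrite subsetI subsetIr andbT setISS ?joingSS ?joing_subl //.
  rewrite -modM ?joing_subr // setSI // join_subG sHZM_YM andbT.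
  by rewrite joingSS ?joing_subl.
apply: subset_trans sXH_YM _; rewrite (norm_joinEl nMY) -group_modl //.
rewrite mulG_subG subxx /= (subset_trans _ (joing_subr X _)) //.
by rewrite setSI.
Qed.

Lemma modular_right_lift :
    (forall Y Z, M \subset Y -> Y \subset K -> Z \subset K -> H \subset Z ->
       H <*> (Y :&: Z) = (H <*> Y) :&: Z) ->
  forall Y Z, Y \subset K -> Z \subset K -> H \subset Z ->
    H <*> (Y :&: Z) = (H <*> Y) :&: Z.
Proof.
move=> modM Y Z sYK sZK sHZ; apply/eqP; rewrite eqEsubset joing_modl_sub //=.
have nMY : Y \subset 'N(M) := subset_trans sYK (normal_norm nsMK).
have sMZ := subset_trans sMH sHZ.
apply: subset_trans (_ : (H <*> (Y <*> M)) :&: Z \subset _).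
  by rewrite setSI // joingSS ?joing_subl.
rewrite -modM ?joing_subr //; last by rewrite join_subG sYK normal_sub.
rewrite join_subG joing_subl /= (norm_joinEl nMY) setIC -group_modr //.
rewrite mulG_subG.
by rewrite (subset_trans sMH (joing_subl _ _)) andbT setIC joing_subr.
Qed.

End ModularAboveNormal.

Definition short_interval M K :=
  forall X Z, M \subset X -> X \subset Z -> Z \subset K ->
    [\/ X :=: M, X :=: Z | Z :=: K].

Lemma modular_short_interval M H K :
  M <| K -> M \subset H -> H \subset K -> short_interval M K -> modular H K.
Proof.
move=> nsMK sMH sHK shortMK; split=> //; split.
  apply: (modular_left_lift nsMK sMH) => X Z sMX sXZ sZK.
  have [->|->|->] := shortMK X Z sMX sXZ sZK.
  - have sMHZ : M \subset H :&: Z by rewrite subsetI sMH (subset_trans sMX sXZ).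
    by rewrite (joing_idPr sMHZ) (joing_idPr sMH).
  - by rewrite (joing_idPl (subsetIr H Z)) (setIidPr (joing_subl Z H)).
  have sXHK : X <*> H \subset K by rewrite join_subG sHK (subset_trans sXZ sZK).
  by rewrite (setIidPl sHK) (setIidPl sXHK).
apply: (modular_right_lift nsMK sMH) => Y Z sMY sYK sZK sHZ.
have [->|->|->] := shortMK H Z sMH sHZ sZK.
- have sMYZ : M \subset Y :&: Z by rewrite subsetI sMY (subset_trans sMH sHZ).
  by rewrite (joing_idPr sMYZ) (joing_idPr sMY).
- by rewrite (joing_idPl (subsetIr Y Z)) (setIidPr (joing_subl Z Y)).
have sHYK : H <*> Y \subset K by rewrite join_subG sYK (subset_trans sHZ sZK).
by rewrite (setIidPl sYK) (setIidPl sHYK).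
Qed.

Lemma short_interval_index_pq M K p q :
  prime p -> prime q -> #|K : M| = (p * q)%N -> short_interval M K.
Proof.
move=> pr_p pr_q iKM X Z sMX sXZ sZK.
have := Lagrange_index sZK (subset_trans sMX sXZ).
rewrite -(Lagrange_index sXZ sMX) mulnA iKM => /(muln3_eq_prime_mul pr_p pr_q).
case=> /eqP; rewrite indexg_eq1 => sub.
- by constructor 3; apply/eqP; rewrite eqEsubset sZK.
- by constructor 2; apply/eqP; rewrite eqEsubset sXZ.
- by constructor 1; apply/eqP; rewrite eqEsubset sub.
Qed.

End ModularSubgroups.



Section MorphimModular.
Variables (aT rT : finGroupType) (D : {group aT}) (f : {morphism D >-> rT}).

Lemma morphim_modular (H G : {group aT}) :
  G \subset D -> 'ker f \subset H -> modular H G -> modular (f @* H) (f @* G).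
Proof.
move=> sGD sKH [sHG [modl modr]].
have sKG := subset_trans sKH sHG.
have sfGD := morphimS f sGD.
have preG (Xb : {group rT}) : Xb \subset f @* G -> f @*^-1 Xb \subset G.
  by move=> sXG; rewrite sub_morphpre_im // (subset_trans sXG sfGD).
have preK (Xb : {group rT}) : Xb \subset f @* G -> f @* (f @*^-1 Xb) = Xb.
  by move=> sXG; rewrite morphpreK // (subset_trans sXG sfGD).
have sHD := subset_trans sHG sGD.
split; first exact: morphimS.
split=> [Xb Zb sXZ sZG | Yb Zb sYG sZG sHZ].
  have := congr1 (fun A => f @* A) (modl _ _ (morphpreS f sXZ) (preG _ sZG)).
  have sHZD : H :&: f @*^-1 Zb \subset D := subset_trans (subsetIl _ _) sHD.
  rewrite /= morphimIG ?ker_sub_pre // !morphimY ?subsetIl //.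
  by rewrite morphimIG ?ker_sub_pre // !preK // (subset_trans sXZ).
have sHZ' : H \subset f @*^-1 Zb by rewrite -sub_morphim_pre.
have := congr1 (fun A => f @* A) (modr _ _ (preG _ sYG) (preG _ sZG) sHZ').
have sYZD : f @*^-1 Yb :&: f @*^-1 Zb \subset D by rewrite subIset ?subsetIl.
rewrite /= morphimIG ?ker_sub_pre // !morphimY ?subsetIl //.
by rewrite morphimIG ?ker_sub_pre // !preK.
Qed.

End MorphimModular.

Section SigmaQuasinormal.
Variables (I : Type) (sigma : nat -> I).

Lemma sigma_primary_dvd (aT rT : finGroupType)
    (A : {set aT}) (B : {group rT}) :
  #|A| %| #|B| -> sigma_primary sigma B -> sigma_primary sigma A.
Proof.
move=> dvdAB [i sigmaB]; exists i => r.
rewrite mem_primes => /and3P[pr_r _ r_A].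
by apply: sigmaB; rewrite mem_primes pr_r cardG_gt0 (dvdn_trans r_A dvdAB).
Qed.

Variable gT : finGroupType.
Implicit Types H K M : {group gT}.

Lemma normal_sigma_quasinormal H K : H <| K -> sigma_quasinormal sigma H K.
Proof.
move=> nsHK; split; last exact: normal_modular.
by apply: ssn_step (ssn_refl _ _); [exact: normal_sub | left].
Qed.

Lemma sigma_quasinormal_index_pq M H K p q :
    prime p -> prime q -> M <| K -> M \subset H -> H \subset K ->
    #|K : M| = (p * q)%N -> sigma_primary sigma (K / M) ->
  sigma_quasinormal sigma H K.
Proof.
move=> pr_p pr_q nsMK sMH sHK iKM spKM; split.
  apply: ssn_step sHK _ (ssn_refl _ _); right; apply: sigma_primary_dvd spKM.
  rewrite !card_quotient ?gcore_norm ?normal_norm // indexgS //.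
  by rewrite sub_gcore ?normal_norm.
apply: modular_short_interval nsMK sMH sHK _.
exact: short_interval_index_pq pr_p pr_q iKM.
Qed.

End SigmaQuasinormal.

Lemma Pgroup_type_structure (gT : finGroupType) p q (P : {group gT}) :
  Pgroup_type p q P ->
  exists2 A : {group gT}, p.-abelem A &
    [/\ prime p, prime q, #|P : A| = q &
        forall B : {group gT}, B \subset A -> B <| P].
Proof.
case=> A [t [abA [pr_q [_ [ord_t [defP [nBt not_cAt]]]]]]].
have [nsAP _ mulAt _ _] := sdprod_context defP.
have ntA : A :!=: 1 by apply: contraNneq not_cAt => ->; rewrite cent1T inE.
have [pr_p _ _] := pgroup_pdiv (abelem_pgroup abA) ntA.
exists A => //; split=> // [|B sBA].
  by rewrite -divgS ?normal_sub // -(sdprod_card defP) -orderE ord_t mulKn.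
rewrite /normal (subset_trans sBA (normal_sub nsAP)) -mulAt mulG_subG.
by rewrite sub_abelian_norm ?(abelem_abelian abA) //= cycle_subG nBt.
Qed.

Section PowerSubgroups.
Variables (gT : finGroupType) (p q : nat) (A P H : {group gT}).
Hypotheses (abA : p.-abelem A) (pr_p : prime p) (pr_q : prime q).
Hypothesis iPA : #|P : A| = q.
Hypotheses (nsA : forall B : {group gT}, B \subset A -> B <| P).
Hypotheses (sHP : H \subset P) (not_sHA : ~~ (H \subset A)).

Lemma index_join_power (B : {group gT}) :
  A :&: H \subset B -> B \subset A -> #|B <*> H : B| = q.
Proof.
move=> sAHB sBA.
have nBH : H \subset 'N(B) := subset_trans sHP (normal_norm (nsA sBA)).
have BHI : B :&: H = A :&: H.
  by apply/eqP; rewrite eqEsubset setSI //= subsetI sAHB subsetIr.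
rewrite (norm_joinEr nBH) indexMg -indexgI setIC BHI setIC indexgI.
have ntHA : #|H : A| != 1%N by rewrite indexg_eq1.
apply/(prime_nt_dvdP pr_q ntHA).
have nAH : H \subset 'N(A) := subset_trans sHP (normal_norm (nsA (subxx A))).
rewrite -indexMg -(norm_joinEr nAH) -iPA indexSg ?joing_subl //.
by rewrite join_subG sHP normal_sub ?nsA.
Qed.

Lemma joing_power_subgroup : A <*> H = P.
Proof.
have sAP := normal_sub (nsA (subxx A)).
have sAHP : A <*> H \subset P by rewrite join_subG sAP sHP.
apply/eqP; rewrite eqEcard sAHP -(Lagrange sAP) -(Lagrange (joing_subl A H)).
by rewrite index_join_power ?subsetIl ?subxx // iPA leqnn.
Qed.

Lemma index_join_cycle (B : {group gT}) (a : gT) :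
  B \subset A -> a \in A -> a \notin B -> #|B <*> <[a]> : B| = p.
Proof.
move=> sBA Aa notBa.
have nBa : <[a]> \subset 'N(B).
  by rewrite cycle_subG (subsetP (sub_abelian_norm (abelem_abelian abA) sBA)).
have ord_a : #[a] = p.
  by apply: abelem_order_p abA Aa _; apply: contraNneq notBa => ->.
rewrite (norm_joinEr nBa) indexMg -indexgI prime_TIg ?cycle_subG //.
  by rewrite indexg1 -orderE.
by rewrite -orderE ord_a.
Qed.

Lemma index_join_cycle_power (B : {group gT}) (a : gT) :
  A :&: H \subset B -> B \subset A -> a \in A -> a \notin B ->
  #|(B <*> <[a]>) <*> H : B| = (p * q)%N.
Proof.
move=> sAHB sBA Aa notBa; have sBC : B \subset B <*> <[a]> := joing_subl _ _.
rewrite -(Lagrange_index (joing_subl _ H) sBC) index_join_cycle // mulnC.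
have sCA : B <*> <[a]> \subset A by rewrite join_subG sBA cycle_subG.
by rewrite index_join_power ?(subset_trans sAHB sBC).
Qed.

End PowerSubgroups.

Section QsigmaTPullback.
Variables (I : Type) (sigma : nat -> I) (gT rT : finGroupType).
Variables (D G : {group gT}) (f : {morphism D >-> rT}).
Hypotheses (QT : QsigmaT sigma G) (sGD : G \subset D) (sKG : 'ker f \subset G).

Lemma morphpre_normal_sigma_quasinormal (B : {group rT}) :
  B <| f @* G -> sigma_quasinormal sigma (f @*^-1 B) G.
Proof.
move=> nsB; apply: normal_sigma_quasinormal.
have sfGD : f @* G \subset f @* D := morphimS f sGD.
rewrite -(morphimGK sKG sGD) morphpre_normal //.
exact: subset_trans (normal_sub nsB) sfGD.
Qed.

Lemma morphpre_sigma_quasinormal_index_pq (M H K : {group rT}) p q :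
    prime p -> prime q -> M <| K -> M \subset H -> H \subset K ->
    K \subset f @* G -> #|K : M| = (p * q)%N -> sigma_primary sigma (K / M) ->
    sigma_quasinormal sigma (f @*^-1 K) G ->
  sigma_quasinormal sigma (f @*^-1 H) G.
Proof.
move=> pr_p pr_q nsMK sMH sHK sKfG iKM spKM; apply: QT.
have sKfD : K \subset f @* D := subset_trans sKfG (morphimS f sGD).
have sMfD := subset_trans (normal_sub nsMK) sKfD.
have nsMK' : f @*^-1 M <| f @*^-1 K by rewrite morphpre_normal.
apply: (sigma_quasinormal_index_pq pr_p pr_q nsMK'); rewrite ?morphpreS //.
  by rewrite index_morphpre.
apply: sigma_primary_dvd spKM.
by rewrite !card_quotient ?normal_norm // index_morphpre.
Qed.

Section PowerPullback.
Variables (p q : nat) (A P H : {group rT}).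
Hypotheses (nsP : P <| f @* G) (spP : sigma_primary sigma P).
Hypotheses (abA : p.-abelem A) (pr_p : prime p) (pr_q : prime q).
Hypothesis iPA : #|P : A| = q.
Hypotheses (nsA : forall B : {group rT}, B \subset A -> B <| P).
Hypotheses (sHP : H \subset P) (not_sHA : ~~ (H \subset A)).

Lemma morphpre_join_power_sigma_quasinormal (B : {group rT}) :
    A :&: H \subset B -> B \subset A ->
  sigma_quasinormal sigma (f @*^-1 (B <*> H)) G.
Proof.
have [n] := ubnP #|A : B|; elim: n B => // n IH B ltABn sAHB sBA.
have [sAB | /subsetPn[a Aa notBa]] := boolP (A \subset B).
  have eBA : B :=: A by apply/eqP; rewrite eqEsubset sBA.
  have -> : (B <*> H)%G = P.
    apply: group_inj; rewrite /= eBA.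
    exact: joing_power_subgroup pr_q iPA nsA sHP not_sHA.
  exact: morphpre_normal_sigma_quasinormal nsP.
pose C := (B <*> <[a]>)%G.
have sBC : B \subset C := joing_subl _ _.
have sCA : C \subset A by rewrite join_subG sBA cycle_subG.
have sCHP : C <*> H \subset P by rewrite join_subG sHP normal_sub ?nsA.
have qnCH : sigma_quasinormal sigma (f @*^-1 (C <*> H)) G.
  apply: (IH _ _ (subset_trans sAHB sBC) sCA).
  have iCB := index_join_cycle abA pr_p sBA Aa notBa.
  have := Lagrange_index sCA sBC; rewrite iCB => eAB.
  rewrite -ltnS (leq_trans _ ltABn) // ltnS -eAB.
  by rewrite ltn_Pmulr ?prime_gt1 ?indexg_gt0.
apply: (morphpre_sigma_quasinormal_index_pq pr_p pr_q _ (joing_subl B H)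
  _ _ _ _ qnCH).
- by rewrite /= (normalS _ sCHP (nsA sBA)) // (subset_trans sBC) ?joing_subl.
- by rewrite /= joingSS.
- exact: subset_trans sCHP (normal_sub nsP).
- exact: (index_join_cycle_power abA pr_p pr_q iPA nsA sHP not_sHA
    sAHB sBA Aa notBa).
apply: sigma_primary_dvd spP; rewrite card_quotient; last first.
  exact: subset_trans sCHP (normal_norm (nsA sBA)).
exact: dvdn_trans (dvdn_indexg _ _) (cardSg sCHP).
Qed.

End PowerPullback.

Lemma morphpre_Pgroup_sigma_quasinormal p q (P H : {group rT}) :
    P <| f @* G -> sigma_primary sigma P -> Pgroup_type p q P -> H \subset P ->
  sigma_quasinormal sigma (f @*^-1 H) G.
Proof.
move=> nsP spP /Pgroup_type_structure[A abA [pr_p pr_q iPA nsA]] sHP.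
have [sHA | not_sHA] := boolP (H \subset A).
  apply: QT (morphpre_normal_sigma_quasinormal nsP).
  apply: normal_sigma_quasinormal.
  have sPfD : P \subset f @* D.
    exact: subset_trans (normal_sub nsP) (morphimS f sGD).
  by rewrite morphpre_normal ?nsA ?sPfD // (subset_trans sHP sPfD).
have eH : ((A :&: H)%G <*> H)%G = H by apply/group_inj/joing_idPr/subsetIr.
have := morphpre_join_power_sigma_quasinormal nsP spP abA pr_p pr_q iPA nsA
  sHP not_sHA (subxx (A :&: H)) (subsetIl A H).
by rewrite eH.
Qed.

Lemma morphpre_modular (B : {group rT}) :
  B \subset f @* G -> modular (f @*^-1 B) G -> modular B (f @* G).
Proof.
move=> sBfG modB.
have eB : (f @* (f @*^-1 B))%G = B.
  apply: group_inj; rewrite /= morphpreK //.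
  exact: subset_trans sBfG (morphimS f sGD).
by rewrite -eB; apply: morphim_modular; rewrite ?ker_sub_pre.
Qed.

End QsigmaTPullback.

Theorem lemma2p5 (I : Type) (sigma : nat -> I) (gT : finGroupType)
  (G : {group gT}) :
  QsigmaT sigma G ->
  forall R : {group gT}, R <| G -> Q_sigma_P sigma (G / R)%G.
Proof.
move=> QT R nsRG p q N P nsN _ nsP spP typeP H sHP.
pose f := comp_morphism (coset_morphism R) (coset_morphism N).
have sGD : G \subset coset R @*^-1 'N(N).
  by rewrite -sub_quotient_pre ?normal_norm.
have sKG : 'ker f \subset G.
  by rewrite ker_comp ker_coset sub_cosetpre_quo ?normal_sub.
have efG : f @* G = (G / R)%G / N by rewrite morphim_comp.
have nsPf : P <| f @* G by rewrite efG.
have sHfG : H \subset f @* G.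
  by rewrite efG; exact: subset_trans sHP (normal_sub nsP).
have -> : ((G / R)%G / N)%G = (f @* G)%G by apply: group_inj; rewrite /= efG.
apply: (morphpre_modular sGD sHfG).
by case: (morphpre_Pgroup_sigma_quasinormal QT sGD sKG nsPf spP typeP sHP).
Qed.
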